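(* Let $\mathfrak{t},\mathfrak{w}$ be sesquilinear forms on $\mathbb{C}^n$ with $\mathfrak{w}\geq0$. (i) The following are equivalent: (a) $\mathfrak{t}$ is $\mathfrak{w}$-left bounded; (b) $\mathfrak{t}$ is $\mathfrak{w}$-left regular; (c) $\ker(\mathfrak{w})\subseteq\ker(\mathfrak{t})$. (ii) $\mathfrak{t}$ is $\mathfrak{w}$-left strongly singular if and only if $\ker(\mathfrak{w})+\ker(\mathfrak{t})=\mathbb{C}^n$.
   Context: A sesquilinear form on a complex vector space $\mathcal{D}$ is a map $\mathfrak{t}:\mathcal{D}\times\mathcal{D}\to\mathbb{C}$, linear in the first and anti-linear in the second variable; write $\mathfrak{t}[f]=\mathfrak{t}(f,f)$; it is non-negative ($\mathfrak{t}\geq0$) if $\mathfrak{t}[f]\geq0$ for all $f$. $\ker(\mathfrak{t}):=\{f\in\mathcal{D}:\mathfrak{t}(f,g)=0\ \forall g\in\mathcal{D}\}$. For non-negative forms $\mathfrak{u},\mathfrak{w}$: $\mathfrak{u}$ is $\mathfrak{w}$-absolutely continuous if $\mathfrak{w}[f_n]\to0$ and $\mathfrak{u}[f_n-f_m]\to0$ imply $\mathfrak{u}[f_n]\to0$; $\mathfrak{u}$ is $\mathfrak{w}$-singular if for every $f$ there is $\{f_n\}$ with $\mathfrak{w}[f_n]\to0$ and $\mathfrak{u}[f-f_n]\to0$. $M_l(\mathfrak{t})$ is the set of non-negative forms $\mathfrak{s}_1$ for which there is a non-negative form $\mathfrak{s}_2$ with $|\mathfrak{t}(f,g)|\leq\mathfrak{s}_1[f]^{1/2}\mathfrak{s}_2[g]^{1/2}$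 for all $f,g$. $\mathfrak{t}$ is $\mathfrak{w}$-left bounded if $C\mathfrak{w}\in M_l(\mathfrak{t})$ for some $C>0$; $\mathfrak{w}$-left regular if some $\mathfrak{s}_1\in M_l(\mathfrak{t})$ is $\mathfrak{w}$-absolutely continuous; $\mathfrak{w}$-left strongly singular if some $\mathfrak{s}_1\in M_l(\mathfrak{t})$ is $\mathfrak{w}$-singular. *)

(* C^n is modelled as row vectors 'rV[R[i]]_n, where
   R[i] = complex R (mathcomp-real-closed) for R : realType (the reals). *)
From HB Require Import structures.
From mathcomp Require Import all_boot all_order all_algebra.
From mathcomp Require Import reals.
From mathcomp Require Import complex.
Set Implicit Arguments. Unset Strict Implicit. Unset Printing Implicit Defensive.
Import Order.TTheory GRing.Theory Num.Theory.
Local Open Scope ring_scope.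

Section SesqForms.
Variables (R : realType) (n : nat).
Local Notation C := R[i].
Local Notation V := 'rV[C]_n.

Definition sform := V -> V -> C.

Definition is_sesquilinear (t : sform) : Prop :=
  (forall (a : C) (f g h : V), t (a *: f + g) h = a * t f h + t g h) /\
  (forall (a : C) (f g h : V), t f (a *: g + h) = a^* * t f g + t f h).

(* t[f] >= 0 for all f (order of C: real and non-negative) *)
Definition nonneg (t : sform) : Prop := forall f : V, 0 <= t f f.

Definition nnform (t : sform) : Prop := is_sesquilinear t /\ nonneg t.

Definition kerf (t : sform) (f : V) : Prop := forall g : V, t f g = 0.

Definition cvg0 (x : nat -> C) : Prop :=
  forall e : C, 0 < e -> exists N : nat, forall k, (N <= k)%N -> `|x k| < e.

Definition cvg0_2 (x : nat -> nat -> C) : Prop :=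
  forall e : C, 0 < e -> exists N : nat,
    forall k l, (N <= k)%N -> (N <= l)%N -> `|x k l| < e.

Definition abs_continuous (u w : sform) : Prop :=
  forall fs : nat -> V,
    cvg0 (fun k => w (fs k) (fs k)) ->
    cvg0_2 (fun k l => u (fs k - fs l) (fs k - fs l)) ->
    cvg0 (fun k => u (fs k) (fs k)).

Definition singular (u w : sform) : Prop :=
  forall f : V, exists fs : nat -> V,
    cvg0 (fun k => w (fs k) (fs k)) /\
    cvg0 (fun k => u (f - fs k) (f - fs k)).

Definition in_Ml (t s1 : sform) : Prop :=
  nnform s1 /\ exists s2 : sform, nnform s2 /\
    forall f g : V, `|t f g| <= sqrtC (s1 f f) * sqrtC (s2 g g).

Definition left_bounded (t w : sform) : Prop :=
  exists c : C, 0 < c /\ in_Ml t (fun f g => c * w f g).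

Definition left_regular (t w : sform) : Prop :=
  exists s1 : sform, in_Ml t s1 /\ abs_continuous s1 w.

Definition left_strongly_singular (t w : sform) : Prop :=
  exists s1 : sform, in_Ml t s1 /\ singular s1 w.

End SesqForms.
Arguments sform : clear implicits.

From HB Require Import structures.
From mathcomp Require Import all_boot all_order all_algebra.
From mathcomp Require Import reals complex ring.
Set Implicit Arguments. Unset Strict Implicit. Unset Printing Implicit Defensive.
Import Order.TTheory GRing.Theory Num.Theory.
Local Open Scope ring_scope.

(* On C^n a sesquilinear form t is the matrix form (f, g) |-> f M_t g^*, so
   ker t is the left kernel of M_t; a non-negative form is Hermitian and
   satisfies the Cauchy-Schwarz inequality.

   (i) If s1 in M_l(t) is w-absolutely continuous and w[f] = 0, the constant
   sequence f gives s1[f] = 0, hence t(f, .) = 0.  If ker w is contained in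
   ker t, then M_t = M_w B, so t(f, g) = w(f, g B^* ) and Cauchy-Schwarz for w
   puts w itself in M_l(t).

   (ii) If s1 in M_l(t) is w-singular, w[f_k] -> 0 and s1[h - f_k] -> 0, then
   f_k M_w -> 0 and f_k M_t -> h M_t, so (0, h M_t) lies in the (closed) row
   space of [M_w M_t]: some f0 has f0 M_w = 0 and f0 M_t = h M_t, and
   h = f0 + (h - f0).  Conversely, if C^n = ker w + ker t, the form
   (f, g) |-> <f M_t, g M_t> lies in M_l(t) and is w-singular: h = a + b is
   approximated by the constant sequence a. *)

Lemma mulmx_factor_of_ker_sub (F : fieldType) m p q
    (P : 'M[F]_(m, p)) (Q : 'M[F]_(m, q)) :
  (forall f : 'rV_m, f *m P = 0 -> f *m Q = 0) -> exists B, Q = P *m B.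
Proof.
move=> kerPQ; have /submxP[B /(congr1 trmx)] : (Q^T <= P^T)%MS.
  rewrite submxE -trmx_eq0 trmx_mul trmxK; apply/eqP/row_matrixP => i.
  rewrite row_mul row0 kerPQ // -row_mul -[X in _ *m X]trmxK -trmx_mul.
  by rewrite mulmx_coker trmx0 row0.
by rewrite trmxK trmx_mul trmxK => ->; exists B^T.
Qed.

Section Cvg0.
Variable R : realType.
Local Notation C := R[i].

Lemma eq_cvg0 (x y : nat -> C) : (forall k, x k = y k) -> cvg0 x -> cvg0 y.
Proof. by move=> exy hx e /hx[N hN]; exists N => k /hN; rewrite exy. Qed.

Lemma cvg0_cst0 : cvg0 (fun=> 0 : C).
Proof. by move=> e e0; exists 0%N => k _; rewrite normr0. Qed.

Lemma cvg0_cst_eq0 (x : C) : cvg0 (fun=> x) -> x = 0.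
Proof.
move=> hx; apply/eqP; apply: contraT; rewrite -normr_gt0 => /hx[N /(_ N)].
by rewrite leqnn ltxx => /(_ isT).
Qed.

Lemma cvg0D (x y : nat -> C) : cvg0 x -> cvg0 y -> cvg0 (fun k => x k + y k).
Proof.
move=> hx hy e e0; have e2 : 0 < e / 2 by rewrite divr_gt0.
have [[N1 h1] [N2 h2]] := (hx _ e2, hy _ e2).
exists (maxn N1 N2) => k; rewrite geq_max => /andP[k1 k2].
by rewrite (le_lt_trans (ler_normD _ _)) // [e]splitr ltrD ?h1 ?h2.
Qed.

Lemma cvg0N (x : nat -> C) : cvg0 x -> cvg0 (fun k => - x k).
Proof. by move=> hx e /hx[N hN]; exists N => k; rewrite normrN; apply: hN. Qed.

Lemma cvg0Ml (c : C) (x : nat -> C) : cvg0 x -> cvg0 (fun k => c * x k).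
Proof.
move=> hx e e0; have c1 : 0 < `|c| + 1 by rewrite ltr_wpDl.
have [N hN] := hx _ (divr_gt0 e0 c1); exists N => k /hN xk.
rewrite normrM (le_lt_trans (y := (`|c| + 1) * `|x k|)) ?ler_wpM2r ?lerDl //.
by rewrite mulrC -ltr_pdivlMr.
Qed.

Lemma cvg0_sum (I : Type) (r : seq I) (x : I -> nat -> C) :
  (forall i, cvg0 (x i)) -> cvg0 (fun k => \sum_(i <- r) x i k).
Proof.
move=> hx; elim: r => [|i r IHr].
  by apply: eq_cvg0 cvg0_cst0 => k; rewrite big_nil.
by apply: eq_cvg0 (cvg0D (hx i) IHr) => k; rewrite big_cons.
Qed.

Lemma cvg0_le_sqrt (u a : nat -> C) (b : C) : cvg0 a -> (forall k, 0 <= a k) ->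
  0 <= b -> (forall k, `|u k| <= sqrtC (a k) * b) -> cvg0 u.
Proof.
move=> ha a0 b0 hu e e0; have b1 : 0 < b + 1 by rewrite ltr_wpDl.
have eb : 0 < e / (b + 1) by rewrite divr_gt0.
have [N hN] := ha _ (exprn_gt0 2 eb); exists N => k /hN ak.
have sa : sqrtC (a k) < e / (b + 1).
  rewrite -(sqrCK (ltW eb)) ltr_sqrtC ?nnegrE ?exprn_ge0 ?a0 ?(ltW eb) //.
  by rewrite -(ger0_norm (a0 k)).
apply: le_lt_trans (hu k) (le_lt_trans (ler_wpM2r b0 (ltW sa)) _).
by rewrite mulrAC ltr_pdivrMr // ltr_pM2l // ltrDl.
Qed.

Definition cvg0_rv m (u : nat -> 'rV[C]_m) := forall j, cvg0 (fun k => u k 0 j).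

Lemma eq_cvg0_rv m (u v : nat -> 'rV[C]_m) :
  (forall k, u k = v k) -> cvg0_rv u -> cvg0_rv v.
Proof. by move=> euv hu j; apply: eq_cvg0 (hu j) => k; rewrite euv. Qed.

Lemma cvg0_rvN m (u : nat -> 'rV[C]_m) : cvg0_rv u -> cvg0_rv (fun k => - u k).
Proof. by move=> hu j; apply: eq_cvg0 (cvg0N (hu j)) => k; rewrite mxE. Qed.

Lemma cvg0_rv_row_mx m p (u : nat -> 'rV[C]_m) (v : nat -> 'rV[C]_p) :
  cvg0_rv u -> cvg0_rv v -> cvg0_rv (fun k => row_mx (u k) (v k)).
Proof.
move=> hu hv j; rewrite -(splitK j); case: (split j) => i /=.
  by apply: eq_cvg0 (hu i) => k; rewrite row_mxEl.
by apply: eq_cvg0 (hv i) => k; rewrite row_mxEr.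
Qed.

Lemma cvg0_rv_mulmx m p (u : nat -> 'rV[C]_m) (A : 'M[C]_(m, p)) :
  cvg0_rv u -> cvg0_rv (fun k => u k *m A).
Proof.
move=> hu j; have := cvg0_sum (index_enum 'I_m) (fun i => cvg0Ml (A i j) (hu i)).
by apply: eq_cvg0 => k; rewrite mxE; apply: eq_bigr => i _; rewrite mulrC.
Qed.

Lemma submx_of_cvg0_rv m p (M : 'M[C]_(p, m)) (y : 'rV[C]_m)
    (z : nat -> 'rV[C]_p) :
  cvg0_rv (fun k => z k *m M - y) -> (y <= M)%MS.
Proof.
move=> /(cvg0_rv_mulmx (cokermx M)) hz; rewrite submxE; apply/eqP/rowP => j.
rewrite [RHS]mxE; apply: oppr_inj; rewrite oppr0; apply: cvg0_cst_eq0.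
by apply: eq_cvg0 (hz j) => k; rewrite mulmxBl -mulmxA mulmx_coker mulmx0 sub0r mxE.
Qed.

End Cvg0.

Section SesquilinearForm.
Variables (R : realType) (n : nat).
Local Notation C := R[i].
Local Notation V := 'rV[C]_n.
Variable s : sform R n.
Hypothesis hs : is_sesquilinear s.

Lemma sformDl f g h : s (f + g) h = s f h + s g h.
Proof. by have := hs.1 1 f g h; rewrite scale1r mul1r. Qed.

Lemma sform0l h : s 0 h = 0.
Proof. by apply: (@addrI _ (s 0 h)); rewrite -sformDl !addr0. Qed.

Lemma sformZl a f h : s (a *: f) h = a * s f h.
Proof. by have := hs.1 a f 0 h; rewrite addr0 sform0l addr0. Qed.

Lemma sformBl f g h : s (f - g) h = s f h - s g h.
Proof. by rewrite sformDl -scaleN1r sformZl mulN1r. Qed.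

Lemma sform_suml I (r : seq I) (F : I -> V) h :
  s (\sum_(i <- r) F i) h = \sum_(i <- r) s (F i) h.
Proof. exact: (big_morph (s^~ h) (fun f g => sformDl f g h) (sform0l h)). Qed.

Lemma sformDr f g h : s f (g + h) = s f g + s f h.
Proof. by have := hs.2 1 f g h; rewrite scale1r rmorph1 mul1r. Qed.

Lemma sform0r f : s f 0 = 0.
Proof. by apply: (@addrI _ (s f 0)); rewrite -sformDr !addr0. Qed.

Lemma sformZr a f g : s f (a *: g) = a^* * s f g.
Proof. by have := hs.2 a f g 0; rewrite addr0 sform0r addr0. Qed.

Lemma sformBr f g h : s f (g - h) = s f g - s f h.
Proof. by rewrite sformDr -scaleN1r sformZr rmorphN1 mulN1r. Qed.

Lemma sform_sumr I (r : seq I) f (F : I -> V) :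
  s f (\sum_(i <- r) F i) = \sum_(i <- r) s f (F i).
Proof. exact: (big_morph (s f) (sformDr f) (sform0r f)). Qed.

Lemma sform_delta_r f j : s f 'e_j = (f *m matrix_of_form s) 0 j.
Proof.
rewrite {1}(row_sum_delta f) sform_suml mxE.
by apply: eq_bigr => i _; rewrite sformZl mxE.
Qed.

Lemma sform_matrixE f g : s f g = form Num.conj (matrix_of_form s) f g.
Proof.
rewrite {1}(row_sum_delta g) sform_sumr /form mxE.
apply: eq_bigr => j _; rewrite sformZr sform_delta_r mulrC.
by congr (_ * _); rewrite !mxE.
Qed.

Lemma kerf_matrix_of_form f : kerf s f <-> f *m matrix_of_form s = 0.
Proof.
split=> [kf | fM0 g]; first by apply/rowP => j; rewrite -sform_delta_r kf mxE.
by rewrite sform_matrixE /form fM0 mul0mx mxE.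
Qed.

End SesquilinearForm.

Lemma le_of_quadratic_ge0 (F : numFieldType) (a b N : F) :
  0 <= a -> 0 <= b -> 0 <= N ->
  (forall tau, 0 <= tau -> 2 * tau * N <= a + tau ^+ 2 * N * b) -> N <= a * b.
Proof.
move=> a0 b0 N0 quad; move: b0; rewrite le_eqVlt => /predU1P[b0 | b_pos].
  rewrite -b0 mulr0; move: N0; rewrite le_eqVlt => /predU1P[<- // | N_pos].
  have := quad ((a + 1) / (2 * N)).
  rewrite divr_ge0 ?addr_ge0 ?mulr_ge0 ?(ltW N_pos) // => /(_ isT).
  rewrite -b0 mulr0 addr0 (_ : 2 * _ * N = a + 1) ?gerDl ?ler10 //.
  by field; rewrite gt_eqF.
have := quad b^-1; rewrite invr_ge0 ltW // => /(_ isT).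
rewrite (_ : 2 * b^-1 * N = N / b + N / b); last by ring.
rewrite (_ : b^-1 ^+ 2 * N * b = N / b); last by field; rewrite gt_eqF.
by rewrite lerD2r ler_pdivrMr.
Qed.

Section NonnegForm.
Variables (R : realType) (n : nat).
Variable s : sform R n.
Hypothesis hs : nnform s.

Lemma nnform_conj_sym f g : s g f = (s f g)^*.
Proof.
have [hsq hpos] := hs.
have real_q x : s x x \is Num.real := ger0_real (hpos x).
have sum_real : (s f g + s g f)^* = s f g + s g f.
  apply: conj_Creal.
  have -> : s f g + s g f = s (f + g) (f + g) - s f f - s g g.
    by rewrite !(sformDl hsq, sformDr hsq); ring.
  by rewrite !rpredB.
have diff_imag : (s g f - s f g)^* = s f g - s g f.
  have : ('i * (s g f - s f g))^* = 'i * (s g f - s f g).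
    apply: conj_Creal.
    have -> : 'i * (s g f - s f g) =
              s (f + 'i *: g) (f + 'i *: g) - s f f - s ('i *: g) ('i *: g).
      rewrite (sformDl hsq) !(sformDr hsq) [s ('i *: g) f](sformZl hsq).
      by rewrite [s f ('i *: g)](sformZr hsq) conjCi; ring.
    by rewrite !rpredB.
  rewrite rmorphM /= conjCi mulNr -mulrN => /(mulfI (neq0Ci _))/(congr1 -%R).
  by rewrite opprK opprB.
apply/eqP; rewrite -subr_eq0 -(orFb (_ == 0)) -(mulrn_eq0 _ 2).
have -> : (s g f - (s f g)^*) *+ 2 =
          (s f g + s g f - (s f g + s g f)^*) + ((s g f - s f g)^* - (s f g - s g f)).
  by rewrite rmorphD rmorphB /=; ring.
by rewrite sum_real diff_imag !subrr addr0.
Qed.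

Lemma nnform_CS2 f g : `|s f g| ^+ 2 <= s f f * s g g.
Proof.
have [hsq hpos] := hs.
apply: le_of_quadratic_ge0; rewrite ?exprn_ge0 ?hpos // => tau tau0.
rewrite -subr_ge0 normCK.
apply: le_trans (hpos (f - (tau * s f g) *: g)) _.
rewrite le_eqVlt; apply/orP; left.
rewrite !(sformBl hsq, sformBr hsq, sformZl hsq, sformZr hsq) (nnform_conj_sym f g).
by rewrite rmorphM /= (conj_Creal (ger0_real tau0)); apply/eqP; ring.
Qed.

Lemma nnform_CS f g : `|s f g| <= sqrtC (s f f) * sqrtC (s g g).
Proof.
rewrite -(ler_pXn2r (n := 2)) ?nnegrE ?mulr_ge0 ?sqrtC_ge0 ?hs.2 //.
by rewrite exprMn !sqrtCK nnform_CS2.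
Qed.

End NonnegForm.

Section NonnegFormConstructions.
Variables (R : realType) (n : nat).
Local Notation C := R[i].

Lemma nnform_scale (c : C) (s : sform R n) : 0 <= c -> nnform s ->
  nnform (fun f g => c * s f g).
Proof.
move=> c0 [[sDZl sDZr] hpos]; split=> [|f]; last by rewrite mulr_ge0.
by split=> a f g h; rewrite ?sDZl ?sDZr; ring.
Qed.

Lemma nnform_comp m (s : sform R m) (A : 'M[C]_(n, m)) :
  nnform s -> nnform (fun f g => s (f *m A) (g *m A)).
Proof.
move=> [[sDZl sDZr] hpos]; split=> [|f //].
by split=> a f g h; rewrite mulmxDl -scalemxAl ?sDZl ?sDZr.
Qed.

Lemma nnform_dotmx : nnform (@dotmx C n).
Proof.
split=> [|f]; last exact: dnorm_ge0.
by split=> a f g h; rewrite ?linearDl ?linearDr /= ?linearZl_LR ?linearZr_LR.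
Qed.

End NonnegFormConstructions.

Lemma cvg0_rv_matrix_of_form (R : realType) n (t s1 s2 : sform R n)
    (fs : nat -> 'rV[R[i]]_n) :
  is_sesquilinear t -> nonneg s1 -> nonneg s2 ->
  (forall f g, `|t f g| <= sqrtC (s1 f f) * sqrtC (s2 g g)) ->
  cvg0 (fun k => s1 (fs k) (fs k)) -> cvg0_rv (fun k => fs k *m matrix_of_form t).
Proof.
move=> t_sesq s1_pos s2_pos bound s1_fs j.
apply: (cvg0_le_sqrt (b := sqrtC (s2 'e_j 'e_j)) s1_fs) => [k | | k].
- exact: s1_pos.
- by rewrite sqrtC_ge0.
- by rewrite -sform_delta_r.
Qed.

Section LeftBoundedSingular.
Variables (R : realType) (n : nat).
Variables t w : sform R n.

Lemma left_bounded_regular : left_bounded t w -> left_regular t w.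
Proof.
move=> [c [c0 Ml_cw]]; exists (fun f g => c * w f g); split=> // fs w_fs _.
exact: cvg0Ml.
Qed.

Lemma left_regular_kerf : left_regular t w -> forall f, kerf w f -> kerf t f.
Proof.
move=> [s1 [[[s1_sesq _] [s2 [_ bound]]] s1_ac]] f wf g.
have s1f : s1 f f = 0.
  apply/cvg0_cst_eq0/(s1_ac (fun=> f)); first by rewrite wf; exact: cvg0_cst0.
  by move=> e e0; exists 0%N => k l _ _; rewrite subrr sform0l // normr0.
by apply/eqP; rewrite -normr_le0 (le_trans (bound f g)) // s1f sqrtC0 mul0r.
Qed.

Lemma kerf_left_bounded : is_sesquilinear t -> nnform w ->
  (forall f, kerf w f -> kerf t f) -> left_bounded t w.
Proof.
move=> t_sesq w_nn kerwt; have [w_sesq _] := w_nn.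
have [B tw] : exists B, matrix_of_form t = matrix_of_form w *m B.
  apply: mulmx_factor_of_ker_sub => f.
  by move/(kerf_matrix_of_form w_sesq f)/kerwt/(kerf_matrix_of_form t_sesq f).
pose A := (B^T ^ Num.conj)%sesqui.
have AB : (A^T ^ Num.conj)%sesqui = B by rewrite map_trmx trmxK map_mxCK.
have t_factor f g : t f g = w f (g *m A).
  rewrite sform_matrixE // (sform_matrixE w_sesq) /form tw mulmxA.
  by rewrite trmx_mul map_mxM AB mulmxA.
exists 1; split; first exact: ltr01.
split; first exact: nnform_scale ler01 w_nn.
exists (fun f g => w (f *m A) (g *m A)); split; first exact: nnform_comp.
by move=> f g; rewrite t_factor mul1r nnform_CS.
Qed.

Lemma left_strongly_singular_kerf_sum : is_sesquilinear t -> nnform w ->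
  left_strongly_singular t w ->
  forall h, exists f g, kerf w f /\ kerf t g /\ h = f + g.
Proof.
move=> t_sesq w_nn [s1 [[[_ s1_pos] [s2 [[_ s2_pos] bound]]] s1_sing]] h.
have [w_sesq w_pos] := w_nn; have [fs [w_fs s1_hfs]] := s1_sing h.
pose Mw := matrix_of_form w; pose Mt := matrix_of_form t.
have fs_Mw : cvg0_rv (fun k => fs k *m Mw).
  exact: (cvg0_rv_matrix_of_form w_sesq w_pos w_pos (nnform_CS w_nn)).
have hfs_Mt : cvg0_rv (fun k => (h - fs k) *m Mt).
  exact: (cvg0_rv_matrix_of_form t_sesq s1_pos s2_pos bound).
have : (row_mx 0 (h *m Mt) <= row_mx Mw Mt)%MS.
  apply: (submx_of_cvg0_rv (z := fs)).
  apply: eq_cvg0_rv (cvg0_rv_row_mx fs_Mw (cvg0_rvN hfs_Mt)) => k.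
  by rewrite mul_mx_row opp_row_mx add_row_mx oppr0 addr0 mulmxBl opprB.
case/submxP => f0; rewrite mul_mx_row => /eq_row_mx[Mw_f0 Mt_f0].
exists f0, (h - f0); split; first exact/(kerf_matrix_of_form w_sesq)/esym.
split; last by rewrite addrC subrK.
by apply/(kerf_matrix_of_form t_sesq); rewrite mulmxBl -Mt_f0 subrr.
Qed.

Lemma kerf_sum_left_strongly_singular : is_sesquilinear t ->
  (forall h, exists f g, kerf w f /\ kerf t g /\ h = f + g) ->
  left_strongly_singular t w.
Proof.
move=> t_sesq ker_sum; pose Mt := matrix_of_form t.
exists (fun f g => dotmx (f *m Mt) (g *m Mt)); split.
  split; first by apply: nnform_comp; exact: nnform_dotmx.
  exists (@dotmx R[i] n); split; first exact: nnform_dotmx.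
  move=> f g; rewrite sform_matrixE // /form -dotmxE.
  by apply: nnform_CS; apply: nnform_dotmx.
move=> h; have [a [b [wa [tb ->]]]] := ker_sum h.
exists (fun=> a); split; first by rewrite (wa a); exact: cvg0_cst0.
rewrite (addrC a b) addrK (proj1 (kerf_matrix_of_form t_sesq b) tb) linear0l.
exact: cvg0_cst0.
Qed.

End LeftBoundedSingular.

Theorem mainTheorem2 (R : realType) (n : nat) (t w : sform R n) :
  is_sesquilinear t -> nnform w ->
  ((left_bounded t w <-> left_regular t w) /\
   (left_regular t w <-> (forall f, kerf w f -> kerf t f))) /\
  (left_strongly_singular t w <->
     (forall h : 'rV[R[i]]_n, exists f g, kerf w f /\ kerf t g /\ h = f + g)).
Proof.
move=> t_sesq w_nn; split; [split; split | split].
- exact: left_bounded_regular.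
- by move/left_regular_kerf/(kerf_left_bounded t_sesq w_nn).
- exact: left_regular_kerf.
- by move/(kerf_left_bounded t_sesq w_nn)/left_bounded_regular.
- exact: left_strongly_singular_kerf_sum.
- exact: kerf_sum_left_strongly_singular.
Qed.
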